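(* Let $n\ge1$, $k\ge 1$, and let $s_1,\dots,s_k$ be positive integers. There are $k$ players who independently each open one cereal box per time step; each box contains one of $n$ coupon types chosen uniformly at random, independently of everything else. Player $i$ is currently missing $s_i$ of the $n$ coupon types, and $X_i(s_i)$ is the number of boxes player $i$ must open until they have all $n$ types. Let $Q_1(s_1,\dots,s_k)$ be the probability that the first player is the fastest to complete the collection, i.e. that $X_1(s_1)=\min\{X_1(s_1),\dots,X_k(s_k)\}$. Then $$Q_1(s_1,\dots,s_k)=1-\sum_{1<i}\frac{s_1}{s_1+s_i}+\sum_{1<i<j}\frac{s_1}{s_1+s_i+s_j}-\sum_{1<i<j<l}\frac{s_1}{s_1+s_i+s_j+s_l}+\cdots+(-1)^{k-1}\frac{s_1}{s_1+\cdots+s_k}+o(1),$$ where the indices $i,j,l,\dots$ range over $\{2,\dots,k\}$.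
   Context: The term $o(1)$ denotes a quantity tending to $0$ as $n\to\infty$ with $k$ and $s_1,\dots,s_k$ fixed. *)

From mathcomp Require Import all_boot all_order all_algebra.
From mathcomp Require Import all_classical all_reals all_analysis.
Set Implicit Arguments. Unset Strict Implicit. Unset Printing Implicit Defensive.
Import Order.TTheory GRing.Theory Num.Theory numFieldNormedType.Exports.
Local Open Scope ring_scope.

(* A player who initially owns the coupon types in [A] and whose successive
   boxes contain w`_0, w`_1, ... has all n types after m boxes. *)
Definition complete_by (n : nat) (A : {set 'I_n}) (w : seq 'I_n) (m : nat) : bool :=
  (A :|: [set x | x \in take m w]) == [set: 'I_n].

Definition completes_at (n : nat) (A : {set 'I_n}) (w : seq 'I_n) (t : nat) : bool :=
  complete_by A w t && [forall m : 'I_t, ~~ complete_by A w m].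

Definition not_complete_before (n : nat) (A : {set 'I_n}) (w : seq 'I_n) (t : nat) : bool :=
  [forall m : 'I_t, ~~ complete_by A w m].

(* Outcomes of the first t time steps: player i's boxes are the t-tuple om i;
   all outcomes equally likely (uniform, independent coupons). *)
Definition first_wins_at (n k : nat) (p1 : 'I_k) (A : 'I_k -> {set 'I_n}) (t : nat)
    (om : {ffun 'I_k -> t.-tuple 'I_n}) : bool :=
  completes_at (A p1) (om p1) t &&
  [forall j : 'I_k, (j != p1) ==> not_complete_before (A j) (om j) t].

Definition prob_first_wins_at (R : realType) (n k : nat) (p1 : 'I_k)
    (A : 'I_k -> {set 'I_n}) (t : nat) : R :=
  (#|[set om : {ffun 'I_k -> t.-tuple 'I_n} | first_wins_at p1 A om]|)%:R
  / (#|{ffun 'I_k -> t.-tuple 'I_n}|)%:R.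

(* Q_1 = P(X_1 = min_j X_j) = sum_t P(X_1 = t, X_j >= t for all j) *)
Definition Q1 (R : realType) (n k : nat) (p1 : 'I_k) (A : 'I_k -> {set 'I_n}) : R :=
  limn (series ((fun t => prob_first_wins_at R p1 A t) : R^nat)).

Definition incl_excl (R : realType) (k : nat) (p1 : 'I_k) (s : 'I_k -> nat) : R :=
  \sum_(S : {set 'I_k} | p1 \notin S)
     (-1) ^+ #|S| * ((s p1)%:R / ((s p1)%:R + \sum_(i in S) (s i)%:R)).

(* Inclusion-exclusion over the missing coupon types gives, for a player missing
   s types, P(X > t) = \sum_j b_j (1 - j/n)^t where \sum_j b_j x^j = 1 - (1 - x)^s.
   By independence, P(X_1 = t + 1 <= X_i for all i) is then a finite combination of
   geometric sequences indexed by J in [0, N]^k, and summing over t,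
     Q_1 = \sum_J w_J (J_1/n) / (1 - \prod_i (1 - J_i/n)),   w_J = \prod_i b_{J_i}.
   Each term is w_J J_1 / (\sum_i J_i) + O(1/n), and
     \sum_J w_J J_1 / (\sum_i J_i)
       = \int_0^1 s_1 (1 - x)^(s_1 - 1) \prod_(i <> 1) (1 - (1 - x)^s_i) dx,
   which the substitution x := 1 - x expands into the alternating sum. *)

From mathcomp Require Import all_boot all_order all_algebra.
From mathcomp Require Import all_classical all_reals all_analysis.
From mathcomp Require Import fintype finset.
From mathcomp Require Import ring lra zify.
Set Implicit Arguments. Unset Strict Implicit. Unset Printing Implicit Defensive.
Import Order.TTheory GRing.Theory Num.Theory numFieldNormedType.Exports.
Local Open Scope ring_scope.

Section SignedSubsetSums.
Variable R : comPzRingType.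

Lemma sum_subset_card (I : finType) (M : {set I}) N (phi : nat -> R) :
  (#|M| <= N)%N ->
  \sum_(T : {set I} | T \subset M) phi #|T| = \sum_(j < N.+1) 'C(#|M|, j)%:R * phi j.
Proof.
move=> MN; rewrite (partition_big (fun T : {set I} => inord #|T| : 'I_N.+1) xpredT) //=.
apply: eq_bigr => j _; rewrite -cards_draws -sumr_const mulr_suml.
apply: eq_big => [T|T /andP[TM /eqP <-]]; last first.
  by rewrite mul1r inordK // ltnS (leq_trans (subset_leq_card TM)).
rewrite !inE; case TM: (T \subset M) => //=.
have TN : (#|T| < N.+1)%N by rewrite ltnS (leq_trans (subset_leq_card TM)).
by apply/eqP/eqP => [<-|/eqP Tj]; [rewrite inordK | apply/val_inj; rewrite /= inordK // (eqP Tj)].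
Qed.

Lemma sum_binomial_sign b : \sum_(j < b.+1) 'C(b, j)%:R * (-1) ^+ j = (b == 0%N)%:R :> R.
Proof.
have := exprDn (1 : R) (-1) b; rewrite subrr expr0n => ->.
by apply: eq_bigr => j _; rewrite expr1n mul1r mulr_natl.
Qed.

Lemma sum_subset_sign (I : finType) (B : {set I}) :
  \sum_(T : {set I} | T \subset B) (-1) ^+ #|T| = (B == set0)%:R :> R.
Proof.
by rewrite (sum_subset_card (fun j => (-1) ^+ j) (leqnn #|B|)) sum_binomial_sign cards_eq0.
Qed.

Lemma prod_1D_subset (I : finType) (P : pred I) (a : I -> R) :
  \prod_(i | P i) (1 + a i) = \sum_(S : {set I} | S \subset P) \prod_(i in S) a i.
Proof.
pose b i := if P i then a i else 0.
have -> : \prod_(i | P i) (1 + a i) = \prod_i \sum_(c : bool) (if c then b i else 1).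
  rewrite [RHS](bigID P) /= [X in _ * X]big1 ?mulr1; last first.
    by move=> i /negbTE Pi; rewrite big_bool /= /b Pi add0r.
  by apply: eq_bigr => i Pi; rewrite big_bool /= /b Pi addrC.
rewrite bigA_distr_bigA /= (reindex (fun S : {set I} => [ffun i => i \in S])) /=; last first.
  exists (fun f : {ffun I -> bool} => [set i | f i]) => [S _|f _].
    by apply/setP => i; rewrite inE ffunE.
  by apply/ffunP => i; rewrite !ffunE inE.
rewrite [RHS]big_mkcond; apply: eq_bigr => S _.
under eq_bigr do rewrite ffunE.
rewrite -big_mkcond /=; case: ifP => [/subsetP SP|/negbT /subsetPn [i iS nPi]].
  by apply: eq_bigr => i /SP Pi; rewrite /b ifT.
by rewrite (bigD1 i) //= /b ifN ?mul0r.
Qed.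

End SignedSubsetSums.

Lemma sumr_pred_card (R : pzSemiRingType) (I : finType) (P : pred I) :
  \sum_i (P i)%:R = #|P|%:R :> R.
Proof.
rewrite -sum1_card natr_sum [RHS]big_mkcond.
by apply: eq_bigr => i _; rewrite -topredE /=; case: (P i).
Qed.

Lemma sum_tupleS (V : nmodType) (T : finType) t (F : t.+1.-tuple T -> V) :
  \sum_(w : t.+1.-tuple T) F w = \sum_(x : T) \sum_(w : t.-tuple T) F [tuple of x :: w].
Proof.
rewrite pair_bigA /= (reindex (fun p : T * t.-tuple T => [tuple of p.1 :: p.2])) //=.
exists (fun w : t.+1.-tuple T => (thead w, [tuple of behead w])).
  by move=> [x w] _ /=; congr (_, _); apply: val_inj.
by move=> w _; case/tupleP: w => x w; apply: val_inj.
Qed.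

Lemma sum_avoid_prefix (R : pzSemiRingType) (T : finType) (B : {set T}) t m :
  (m <= t)%N ->
  \sum_(w : t.-tuple T) (all (fun x => x \notin B) (take m w))%:R
    = ((#|T| - #|B|) ^ m * #|T| ^ (t - m))%:R :> R.
Proof.
have sum1 t' : \sum_(w : t'.-tuple T) (1 : R) = (#|T| ^ t')%:R.
  by rewrite sumr_const card_tuple.
elim: t m => [|t IH] [|m] //= mt.
- by rewrite (eq_bigr (fun _ => 1)) ?sum1 // => w _; rewrite take0.
- by rewrite (eq_bigr (fun _ => 1)) ?sum1 ?mul1n ?subn0 // => w _; rewrite take0.
rewrite sum_tupleS (eq_bigr (fun x => (x \notin B)%:R *
    \sum_(w : t.-tuple T) (all (fun x => x \notin B) (take m w))%:R)); last first.
  move=> x _; rewrite mulr_sumr; apply: eq_bigr => w _ /=.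
  by case: (x \in B); rewrite /= ?mul0r ?mul1r.
have cardC : #|(fun x => x \notin B)| = (#|T| - #|B|)%N.
  transitivity #|~: B|; first by apply: eq_card => x; rewrite !inE.
  by rewrite cardsCs setCK.
by rewrite -mulr_suml IH // sumr_pred_card -natrM cardC subSS expnS mulnA.
Qed.

Lemma complete_by_incl_excl (R : comPzRingType) n (A : {set 'I_n}) (w : seq 'I_n) m :
  (complete_by A w m)%:R = \sum_(T : {set 'I_n} | T \subset ~: A)
      (-1) ^+ #|T| * (all (fun x => x \notin T) (take m w))%:R :> R.
Proof.
set S := [set x | x \in take m w].
have avoidE (T : {set 'I_n}) : all (fun x => x \notin T) (take m w) = (T \subset ~: S).
  apply/allP/subsetP => [avT x xT|TS x xw /=].
    by rewrite !inE; apply: contraL xT => /avT.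
  by apply: contraL xw => /TS; rewrite !inE.
transitivity (\sum_(T : {set 'I_n} | T \subset ~: A :&: ~: S) (-1) ^+ #|T| : R); last first.
  rewrite big_mkcond [RHS]big_mkcond; apply: eq_bigr => T _; rewrite subsetI avoidE.
  by case: (T \subset ~: A); case: (T \subset ~: S); rewrite /= ?mulr1 ?mulr0.
rewrite sum_subset_sign -setCU /complete_by -/S; congr (nat_of_bool _)%:R.
by apply/eqP/eqP => [->|AS]; [rewrite setCT | rewrite -[_ :|: _]setCK AS setC0].
Qed.

Lemma complete_by_mono n (A : {set 'I_n}) w m m' :
  (m <= m')%N -> complete_by A w m -> complete_by A w m'.
Proof.
move=> mm' /eqP full; apply/eqP/setP => x; rewrite inE.
have : x \in A :|: [set x | x \in take m w] by rewrite full inE.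
rewrite !inE => /orP [->//|xw]; apply/orP; right.
by move: xw; rewrite -(take_takel w mm') => /mem_take.
Qed.

Lemma not_complete_beforeS n (A : {set 'I_n}) w t :
  not_complete_before A w t.+1 = ~~ complete_by A w t.
Proof.
apply/forallP/idP => [/(_ ord_max) //|ncb m].
by apply: contra ncb; apply: complete_by_mono; rewrite -ltnS.
Qed.

Lemma completes_atS n (A : {set 'I_n}) w t :
  completes_at A w t.+1 = complete_by A w t.+1 && ~~ complete_by A w t.
Proof. by rewrite /completes_at -not_complete_beforeS. Qed.

(* Any bound [N >= s] may be used: the terms with [j > s] vanish, and a common bound
   lets the indices of all players range over one finite type. *)
Definition prob_complete_by (R : numFieldType) (n s N m : nat) : R :=
  \sum_(j < N.+1) 'C(s, j)%:R * (-1) ^+ j * (1 - j%:R / n%:R) ^+ m.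

Definition surv_coef (R : pzRingType) (s j : nat) : R :=
  if j == 0%N then 0 else 'C(s, j)%:R * (-1) ^+ j.+1.

Section OnePlayer.
Variables (R : numFieldType) (n : nat) (A : {set 'I_n}) (N : nat).
Hypotheses (n_gt0 : (0 < n)%N) (missingN : (#|~: A| <= N)%N).

Let n_neq0 : n%:R != 0 :> R. Proof. by rewrite pnatr_eq0 -lt0n. Qed.

Lemma sum_complete_by t m : (m <= t)%N ->
  \sum_(w : t.-tuple 'I_n) (complete_by A w m)%:R
    = n%:R ^+ t * prob_complete_by R n #|~: A| N m.
Proof.
move=> mt; under eq_bigr do rewrite complete_by_incl_excl.
rewrite exchange_big /=.
under eq_bigr do rewrite -mulr_sumr sum_avoid_prefix // card_ord.
rewrite (sum_subset_card (fun j => (-1) ^+ j * ((n - j) ^ m * n ^ (t - m))%:R) missingN).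
rewrite /prob_complete_by mulr_sumr; apply: eq_bigr => j _.
have [js|js] := leqP j #|~: A|; last by rewrite bin_small // !mul0r mulr0.
have jn : (j <= n)%N by rewrite (leq_trans js) // -[leqRHS](card_ord n) max_card.
rewrite natrM !natrX natrB //.
have -> : n%:R - j%:R = n%:R * (1 - j%:R / n%:R) :> R.
  by rewrite mulrBr mulr1 mulrCA divff // mulr1.
have -> : n%:R ^+ t = n%:R ^+ m * n%:R ^+ (t - m) :> R by rewrite -exprD subnKC.
by rewrite exprMn; ring.
Qed.

Lemma sum_not_complete_before t :
  \sum_(w : t.+1.-tuple 'I_n) (not_complete_before A w t.+1)%:R / n%:R ^+ t.+1
    = \sum_(j < N.+1) surv_coef R #|~: A| j * (1 - j%:R / n%:R) ^+ t.
Proof.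
rewrite -mulr_suml.
have complE w : (not_complete_before A w t.+1)%:R = 1 - (complete_by A w t)%:R :> R.
  by rewrite not_complete_beforeS; case: (complete_by _ _ _); rewrite ?subrr ?subr0.
under eq_bigr do rewrite complE.
rewrite sumrB sumr_const card_tuple card_ord natrX sum_complete_by //.
rewrite mulrBl -mulr_natl mulr1 divff ?expf_neq0 // mulrAC divff ?expf_neq0 // mul1r.
rewrite /prob_complete_by big_ord_recl [RHS]big_ord_recl /= /surv_coef /=.
rewrite bin0 expr0 !mul0r subr0 expr1n !mulr1 add0r opprD addrA subrr add0r -sumrN.
by apply: eq_bigr => j _; rewrite exprS; ring.
Qed.

Lemma sum_completes_at t :
  \sum_(w : t.+1.-tuple 'I_n) (completes_at A w t.+1)%:R / n%:R ^+ t.+1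
    = \sum_(j < N.+1) surv_coef R #|~: A| j * (j%:R / n%:R) * (1 - j%:R / n%:R) ^+ t.
Proof.
rewrite -mulr_suml.
have diffE w : (completes_at A w t.+1)%:R
    = (complete_by A w t.+1)%:R - (complete_by A w t)%:R :> R.
  rewrite completes_atS; have := @complete_by_mono n A w t t.+1 (leqnSn t).
  by case: (complete_by A w t.+1); case: (complete_by A w t) => /= mono;
    rewrite ?subrr ?subr0 //; have := mono isT.
under eq_bigr do rewrite diffE.
rewrite sumrB !sum_complete_by // -mulrBr mulrAC divff ?expf_neq0 // mul1r.
rewrite /prob_complete_by -sumrB; apply: eq_bigr => j _.
rewrite /surv_coef; case: eqP => [->|_]; first by rewrite !mul0r subr0 !expr1n subrr.
by rewrite !exprS; ring.
Qed.

End OnePlayer.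

Definition weight (R : pzRingType) k N (s : 'I_k -> nat) (J : {ffun 'I_k -> 'I_N.+1}) : R :=
  \prod_i surv_coef R (s i) (J i).

Definition rate (R : numFieldType) n k N (J : {ffun 'I_k -> 'I_N.+1}) : R :=
  \prod_i (1 - (J i)%:R / n%:R).

Section FirstWins.
Variables (R : realType) (n k : nat) (p1 : 'I_k) (A : 'I_k -> {set 'I_n}).

Lemma prob_first_wins_at0 : A p1 != [set: 'I_n] -> prob_first_wins_at R p1 A 0 = 0.
Proof.
move=> notA; rewrite /prob_first_wins_at.
suff -> : #|[set om : {ffun 'I_k -> 0.-tuple 'I_n} | first_wins_at p1 A om]| = 0%N.
  by rewrite mul0r.
apply: eq_card0 => om; rewrite inE /first_wins_at /completes_at /complete_by take0.
suff -> : [set x | x \in [::]] = set0 :> {set 'I_n} by rewrite setU0 (negbTE notA).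
by apply/setP => x; rewrite !inE.
Qed.

Variable N : nat.
Hypotheses (n_gt0 : (0 < n)%N) (missingN : forall i, (#|~: A i| <= N)%N).

Lemma prob_first_wins_atS t :
  prob_first_wins_at R p1 A t.+1 = \prod_i \sum_(j < N.+1)
    surv_coef R #|~: A i| j * (if i == p1 then j%:R / n%:R else 1) * (1 - j%:R / n%:R) ^+ t.
Proof.
rewrite /prob_first_wins_at.
pose wins i : pred (t.+1.-tuple 'I_n) := fun w =>
  if i == p1 then completes_at (A i) w t.+1 else not_complete_before (A i) w t.+1.
have -> : #|[set om : {ffun 'I_k -> t.+1.-tuple 'I_n} | first_wins_at p1 A om]| =
          #|(family wins : simpl_pred {ffun 'I_k -> t.+1.-tuple 'I_n})|.
  apply: eq_card => om; rewrite inE; apply/andP/familyP => [[win1 /forallP winj] i|win].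
    rewrite /wins unfold_in /=; case: eqP => [->//|/eqP ne].
    exact: (implyP (winj i)).
  split; first by have := win p1; rewrite /wins unfold_in /= eqxx.
  apply/forallP => i; apply/implyP => ne.
  by have := win i; rewrite /wins unfold_in /= (negbTE ne).
rewrite card_family foldrE big_map big_enum /= card_ffun card_tuple !card_ord natr_prod.
rewrite !natrX -[X in _ ^+ X](card_ord k) -prodr_const -prodf_div.
apply: eq_bigr => i _; rewrite -sumr_pred_card mulr_suml /wins; case: eqP => [->|_].
  by rewrite (sum_completes_at _ n_gt0 (missingN p1)).
rewrite (sum_not_complete_before _ n_gt0 (missingN i)).
by apply: eq_bigr => j _; rewrite mulr1.
Qed.

Lemma prob_first_wins_at_geometric t :
  prob_first_wins_at R p1 A t.+1 = \sum_(J : {ffun 'I_k -> 'I_N.+1})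
    weight R (fun i => #|~: A i|) J * (J p1)%:R / n%:R * rate R n J ^+ t.
Proof.
rewrite prob_first_wins_atS bigA_distr_bigA; apply: eq_bigr => J _.
rewrite !big_split /= prodrXl -!mulrA; congr (_ * _).
rewrite (bigD1 p1) //= eqxx big1 ?mulr1; first by rewrite !mulrA.
by move=> i /negbTE ->.
Qed.

End FirstWins.

Lemma limn_series_sum_geometric (R : realType) (I : finType) (c r : I -> R) (p : R^nat) :
  p 0%N = 0 -> (forall t, p t.+1 = \sum_i c i * r i ^+ t) ->
  (forall i, c i != 0 -> `|r i| < 1) ->
  limn (series p) = \sum_i c i / (1 - r i).
Proof.
move=> p0 pS r_lt1.
have seriesE : [sequence series p m.+1]_m
    = (fun m => \sum_i series (geometric (c i) (r i)) m).
  apply/funext => m /=; rewrite !seriesEord /= big_ord_recl p0 add0r.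
  rewrite (eq_bigr (fun j : 'I_m => \sum_i c i * r i ^+ j)); last by move=> j _; exact: pS.
  by rewrite exchange_big /=; apply: eq_bigr => i _; rewrite seriesEord.
apply: cvg_lim => //; rewrite -cvg_shiftS seriesE.
apply: (cvg_big (@pseudometric_normed_Zmodule.add_continuous R R^o)) => // i _.
have [->|ci] := eqVneq (c i) 0; last exact: cvg_geometric_series (r_lt1 _ ci).
rewrite mul0r; apply: cvg_near_cst; near=> m.
by rewrite seriesEord /=; apply: big1 => j _; rewrite mul0r.
Unshelve. all: end_near.
Qed.

Section PolyIntegral.
Variable R : numFieldType.

(* The integral of [p] over [0, 1], computed on coefficients. *)
Definition pint (p : {poly R}) : R := \sum_(i < size p) p`_i / i.+1%:R.

Lemma pintE (p : {poly R}) N : (size p <= N)%N -> pint p = \sum_(i < N) p`_i / i.+1%:R.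
Proof.
move=> pN; rewrite /pint (big_ord_widen N (fun i => p`_i / i.+1%:R) pN) big_mkcond.
by apply: eq_bigr => i _; case: ltnP => // pi; rewrite nth_default // mul0r.
Qed.

Lemma pint0 : pint 0 = 0.
Proof. by rewrite /pint size_poly0 big_ord0. Qed.

Lemma pintD (p q : {poly R}) : pint (p + q) = pint p + pint q.
Proof.
rewrite (@pintE _ (maxn (size p) (size q))) ?size_polyD //.
rewrite (@pintE p (maxn (size p) (size q))) ?leq_maxl //.
rewrite (@pintE q (maxn (size p) (size q))) ?leq_maxr //.
by rewrite -big_split; apply: eq_bigr => i _; rewrite coefD mulrDl.
Qed.

Lemma pintZ c (p : {poly R}) : pint (c *: p) = c * pint p.
Proof.
rewrite (@pintE _ (size p)) ?size_scale_leq // /pint mulr_sumr.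
by apply: eq_bigr => i _; rewrite coefZ mulrA.
Qed.

Lemma pint_sum (I : finType) (P : pred I) (F : I -> {poly R}) :
  pint (\sum_(i | P i) F i) = \sum_(i | P i) pint (F i).
Proof. exact: (big_morph pint pintD pint0). Qed.

Lemma pintXn m : pint 'X^m = m.+1%:R^-1.
Proof.
rewrite /pint size_polyXn big_ord_recr /= big1 ?add0r; first by rewrite coefXn eqxx mul1r.
by move=> i _; rewrite coefXn /= (ltn_eqF (ltn_ord i)) mul0r.
Qed.

Lemma exp1BX i :
  (1 - 'X) ^+ i = \sum_(c < i.+1) ('C(i, c)%:R * (-1) ^+ c) *: ('X^c : {poly R}).
Proof.
rewrite exprDn; apply: eq_bigr => c _.
rewrite expr1n mul1r -mulr_natl -mul_polyC [(- 'X) ^+ c]exprNn polyCM rmorphXn.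
by rewrite rmorphN rmorph1 rmorph_nat mulrA.
Qed.

Lemma pint_exp1BX i : pint ((1 - 'X) ^+ i) = i.+1%:R^-1.
Proof.
rewrite exp1BX pint_sum; under eq_bigr do rewrite pintZ pintXn.
have binE c : 'C(i, c)%:R / c.+1%:R = 'C(i.+1, c.+1)%:R / i.+1%:R :> R.
  apply/eqP; rewrite eqr_div ?pnatr_eq0 // -!natrM; apply/eqP; congr (_%:R).
  by rewrite mulnC (mul_bin_diag i.+1 c) mulnC.
have := sum_binomial_sign R i.+1; rewrite big_ord_recl /= bin0 expr0 mulr1 => sum0.
transitivity (\sum_(c < i.+1) - ('C(i.+1, bump 0 c)%:R * (-1) ^+ bump 0 c) / i.+1%:R : R).
  by apply: eq_bigr => c _; rewrite -mulrA mulrCA binE /bump /= add1n exprS; ring.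
rewrite -mulr_suml sumrN.
have -> : \sum_(c < i.+1) 'C(i.+1, bump 0 c)%:R * (-1) ^+ bump 0 c = -1 :> R.
  by apply/eqP; rewrite -subr_eq0 opprK addrC sum0.
by rewrite opprK mul1r.
Qed.

Lemma pint_comp1BX (p : {poly R}) : pint (p \Po (1 - 'X)) = pint p.
Proof.
by rewrite comp_polyE pint_sum [RHS]/pint; apply: eq_bigr => i _; rewrite pintZ pint_exp1BX.
Qed.

End PolyIntegral.

Section SurvivalPolynomial.
Variable R : numFieldType.

Lemma sum_surv_coef_X s N : (s <= N)%N ->
  \sum_(j < N.+1) surv_coef R s j *: ('X^j : {poly R}) = 1 - (1 - 'X) ^+ s.
Proof.
move=> sN; rewrite exp1BX.
rewrite (big_ord_widen N.+1 (fun c => ('C(s, c)%:R * (-1) ^+ c) *: ('X^c : {poly R}))) //.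
rewrite [in RHS]big_mkcond /= !big_ord_recl /= /surv_coef /= scale0r add0r.
rewrite bin0 expr0 mulr1 scale1r opprD addrA subrr add0r -sumrN.
apply: eq_bigr => j _; case: ltnP => [_|sj]; last by rewrite bin_small // mul0r !scale0r oppr0.
by rewrite -scaleNr exprS mulN1r mulrN.
Qed.

Lemma sum_surv_coef_derivX s N : (s <= N)%N ->
  \sum_(j < N.+1) surv_coef R s j *: (j%:R *: ('X^(j.-1) : {poly R}))
    = s%:R *: (1 - 'X) ^+ s.-1.
Proof.
move=> sN; transitivity ((\sum_(j < N.+1) surv_coef R s j *: ('X^j : {poly R}))^`()).
  rewrite (big_morph (@deriv R) (@derivD R) (@deriv0 R)); apply: eq_bigr => j _.
  by rewrite derivZ derivXn scaler_nat.
rewrite sum_surv_coef_X // derivB derivC (deriv_exp (1 - 'X)) derivB derivC derivX.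
by rewrite !sub0r mulN1r mulNrn opprK scaler_nat.
Qed.

End SurvivalPolynomial.

Section LimitIdentity.
Variables (R : realType) (k : nat) (p1 : 'I_k) (s : 'I_k -> nat) (N : nat).
Hypotheses (s1_gt0 : (0 < s p1)%N) (sN : forall i, (s i <= N)%N).

Definition win_prob_limit : R := \sum_(J : {ffun 'I_k -> 'I_N.+1})
  weight R s J * (J p1)%:R / (\sum_i (J i : nat))%:R.

Definition win_density : {poly R} :=
  \prod_i (if i == p1 then (s p1)%:R *: 'X^((s p1).-1) else 1 - 'X^(s i)).

Lemma win_density_comp1BX : win_density \Po (1 - 'X) = \prod_i \sum_(j < N.+1)
  surv_coef R (s i) j *: (if i == p1 then j%:R *: 'X^(j.-1) else 'X^j).
Proof.
rewrite rmorph_prod; apply: eq_bigr => i _; case: eqP => [->|_] /=.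
  by rewrite (sum_surv_coef_derivX _ (sN p1)) comp_polyZ rmorphXn /= comp_polyX.
by rewrite (sum_surv_coef_X _ (sN i)) rmorphB rmorph1 rmorphXn /= comp_polyX.
Qed.

Lemma pint_win_density_comp1BX : pint (win_density \Po (1 - 'X)) = win_prob_limit.
Proof.
rewrite win_density_comp1BX bigA_distr_bigA pint_sum; apply: eq_bigr => J _.
rewrite scaler_prod -/(weight R s J) pintZ (bigD1 p1) //= eqxx.
rewrite (eq_bigr (fun i => 'X^(J i))); last by move=> i /negbTE ->.
rewrite prodrXr -scalerAl -exprD pintZ pintXn.
have [J0|J_gt0] := posnP (J p1).
  suff -> : weight R s J = 0 by rewrite !mul0r.
  by rewrite /weight (bigD1 p1) //= J0 /surv_coef /= mul0r.
by rewrite [in RHS](bigD1 p1) //= -addSn prednK // mulrA.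
Qed.

Lemma pint_win_density : pint win_density = incl_excl R p1 s.
Proof.
rewrite /win_density (bigD1 p1) //= eqxx.
rewrite (eq_bigr (fun i => 1 + - 'X^(s i))); last by move=> i /negbTE ->.
rewrite prod_1D_subset mulr_sumr pint_sum /incl_excl.
rewrite (eq_bigl (fun S : {set 'I_k} => p1 \notin S)); last first.
  move=> S; apply/subsetP/idP => [Sp1|p1S i iS].
    by apply/negP => /Sp1; rewrite -topredE /= eqxx.
  by rewrite -topredE /=; apply: contraNneq p1S => <-.
have signC m : (-1) ^+ m = ((-1) ^+ m)%:P :> {poly R}.
  by rewrite polyC_exp polyCN polyC1.
apply: eq_bigr => S _.
rewrite prodrN prodrXr signC mul_polyC -scalerAl -scalerAr -exprD.
by rewrite !pintZ pintXn -addSn prednK // natrD natr_sum mulrCA.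
Qed.

Lemma win_prob_limitE : win_prob_limit = incl_excl R p1 s.
Proof. by rewrite -pint_win_density_comp1BX pint_comp1BX pint_win_density. Qed.

End LimitIdentity.

Section Estimates.
Variable R : realFieldType.

Lemma prod1B_bounds (I : finType) (x : I -> R) : (forall i, 0 <= x i <= 1) ->
  [/\ 0 <= \prod_i (1 - x i), 1 - \sum_i x i <= \prod_i (1 - x i) &
      \prod_i (1 - x i) <= 1 - \sum_i x i + (\sum_i x i) ^+ 2].
Proof.
move=> x01.
pose bounds (p y : R) := [/\ 0 <= y, 0 <= p, p <= 1, 1 - y <= p & p <= 1 - y + y ^+ 2].
suff [_ p0 _ lo hi] : bounds (\prod_i (1 - x i)) (\sum_i x i) by [].
apply: (big_rec2 bounds); first by rewrite /bounds expr0n /= addr0 subr0 lexx ler01.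
move=> i p y _ [y0 p0 p1 lo hi]; have /andP[x0 x1] := x01 i.
split.
- by rewrite addr_ge0.
- by rewrite mulr_ge0 // subr_ge0.
- by rewrite mulr_ile1 // ?subr_ge0 // lerBlDr lerDl.
- nra.
- nra.
Qed.

Lemma div_perturb_le (u y d : R) : 0 <= u -> u <= y -> 0 < y -> y <= 2^-1 ->
  y - y ^+ 2 <= d -> d <= y -> `|u / d - u / y| <= 2 * y.
Proof.
move=> u0 uy y0 y_half d_lo d_hi.
have y_y2 : 0 < y - y ^+ 2 by rewrite expr2; nra.
have d0 : 0 < d by apply: lt_le_trans d_lo.
have -> : u / d - u / y = u * (y - d) / (d * y) by field; rewrite ?lt0r_neq0.
have dy0 : 0 < d * y by rewrite mulr_gt0.
rewrite ger0_norm; last by apply: divr_ge0; [apply: mulr_ge0; lra | exact: ltW].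
rewrite ler_pdivrMr //.
have num_le : u * (y - d) <= y * y ^+ 2 by apply: ler_pM; lra.
have cube_le : y * y ^+ 2 <= 2 * y * (y - y ^+ 2) * y.
  have : 0 <= y ^+ 3 * (1 - 2 * y) by apply: mulr_ge0; [apply: exprn_ge0; exact: ltW | lra].
  by rewrite !exprS expr0; nra.
apply: (le_trans num_le); apply: (le_trans cube_le).
have y2_ge0 : 0 <= 2 * y * y by nra.
have := ler_wpM2l y2_ge0 d_lo; nra.
Qed.

Lemma geometric_term_approx (a S n : nat) (r : R) :
  (0 < a)%N -> (a <= S)%N -> (2 * S <= n)%N ->
  1 - S%:R / n%:R <= r -> r <= 1 - S%:R / n%:R + (S%:R / n%:R) ^+ 2 ->
  `|a%:R / n%:R / (1 - r) - a%:R / S%:R| <= 2 * (S%:R / n%:R).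
Proof.
move=> a_gt0 aS Sn r_lo r_hi.
have S_gt0 : (0 < S)%N by apply: leq_trans aS.
have nR : 0 < n%:R :> R by rewrite ltr0n; apply: leq_trans Sn; rewrite muln_gt0.
have SR : 0 < S%:R :> R by rewrite ltr0n.
have -> : a%:R / S%:R = a%:R / n%:R / (S%:R / n%:R) :> R by field; rewrite !lt0r_neq0.
apply: div_perturb_le; [by rewrite divr_ge0 | by rewrite ler_pM2r ?invr_gt0 ?ler_nat
  | by rewrite divr_gt0 | | lra | lra].
rewrite ler_pdivrMr // -[X in _ <= X * _]div1r mulrC mulrA ler_pdivlMr ?ltr0n // mulr1.
by rewrite mulrC -natrM ler_nat.
Qed.

End Estimates.

Lemma rate_bounds (R : realFieldType) n k N (J : {ffun 'I_k -> 'I_N.+1}) :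
  (0 < n)%N -> (\sum_i (J i : nat) <= n)%N ->
  [/\ 0 <= rate R n J, 1 - (\sum_i (J i : nat))%:R / n%:R <= rate R n J &
      rate R n J <= 1 - (\sum_i (J i : nat))%:R / n%:R
                      + ((\sum_i (J i : nat))%:R / n%:R) ^+ 2].
Proof.
move=> n_gt0 Jn; have x01 i : 0 <= ((J i)%:R / n%:R : R) <= 1.
  rewrite divr_ge0 ?ler0n //= ler_pdivrMr ?ltr0n // mul1r ler_nat.
  by apply: leq_trans Jn; rewrite (bigD1 i) //= leq_addr.
by rewrite natr_sum mulr_suml; exact: prod1B_bounds.
Qed.

Lemma sum_ffun_ord_le k N (J : {ffun 'I_k -> 'I_N.+1}) : (\sum_i (J i : nat) <= k * N)%N.
Proof.
rewrite -[X in (_ <= X * _)%N](card_ord k) -sum_nat_const.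
by apply: leq_sum => i _; rewrite -ltnS.
Qed.

Section Asymptotics.
Variables (R : realType) (k : nat) (p1 : 'I_k) (s : 'I_k -> nat) (N : nat).
Hypotheses (s1_gt0 : (0 < s p1)%N) (sN : forall i, (s i <= N)%N).

Lemma Q1_geometric n (A : 'I_k -> {set 'I_n}) :
  (k * N < n)%N -> (forall i, #|~: A i| = s i) ->
  Q1 R p1 A = \sum_(J : {ffun 'I_k -> 'I_N.+1})
                weight R s J * (J p1)%:R / n%:R / (1 - rate R n J).
Proof.
move=> kNn missA; have n_gt0 : (0 < n)%N by apply: leq_ltn_trans kNn.
have missN i : (#|~: A i| <= N)%N by rewrite missA.
have missE : (fun i => #|~: A i|) = s by apply/funext.
apply: limn_series_sum_geometric.
- apply: prob_first_wins_at0; apply: contraTneq s1_gt0 => A1.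
  by rewrite -missA A1 setCT cards0.
- by move=> t; rewrite (prob_first_wins_at_geometric _ _ n_gt0 missN) missE.
move=> J; rewrite 2!mulf_eq0 negb_or => /andP[+ _]; rewrite negb_or pnatr_eq0 -lt0n.
move=> /andP[_ J1_gt0].
have SJn : (\sum_i (J i : nat) < n)%N := leq_ltn_trans (sum_ffun_ord_le J) kNn.
have [r0 _ r_hi] := rate_bounds R n_gt0 (ltnW SJn).
have y0 : 0 < (\sum_i (J i : nat))%:R / n%:R :> R.
  by rewrite divr_gt0 ?ltr0n // (leq_trans J1_gt0) // (bigD1 p1) //= leq_addr.
have y1 : (\sum_i (J i : nat))%:R / n%:R < 1 :> R.
  by rewrite ltr_pdivrMr ?ltr0n // mul1r ltr_nat.
rewrite ger0_norm //; nra.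
Qed.

Lemma Q1_geometric_approx n : (2 * (k * N) <= n)%N ->
  `|\sum_(J : {ffun 'I_k -> 'I_N.+1}) weight R s J * (J p1)%:R / n%:R / (1 - rate R n J)
    - win_prob_limit R p1 s N|
  <= (\sum_(J : {ffun 'I_k -> 'I_N.+1}) `|weight R s J|) * (2 * ((k * N)%:R / n%:R)).
Proof.
move=> kNn; have kN_gt0 : (0 < k * N)%N.
  by rewrite muln_gt0 (leq_ltn_trans (leq0n p1) (ltn_ord p1)) (leq_trans s1_gt0).
have n_gt0 : (0 < n)%N by apply: leq_trans kNn; rewrite muln_gt0.
rewrite /win_prob_limit -sumrB mulr_suml; apply: le_trans (ler_norm_sum _ _ _) _.
apply: ler_sum => J _; have SJ := sum_ffun_ord_le J.
have [J0|J1_gt0] := posnP (J p1).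
  by rewrite J0 !mulr0 !mul0r subrr normr0 mulr_ge0 // mulr_ge0 // divr_ge0.
rewrite -!(mulrA (weight R s J)) -mulrBr normrM; apply: ler_wpM2l => //.
have SJn : (2 * \sum_i (J i : nat) <= n)%N.
  by apply: leq_trans kNn; rewrite leq_mul2l SJ orbT.
have [_ r_lo r_hi] := rate_bounds R n_gt0 (leq_trans (leq_pmull _ (isT : 0 < 2)%N) SJn).
apply: le_trans (geometric_term_approx J1_gt0 _ SJn r_lo r_hi) _.
  by rewrite (bigD1 p1) //= leq_addr.
by rewrite ler_pM2l ?ltr0n // ler_pM2r ?invr_gt0 ?ltr0n // ler_nat.
Qed.

End Asymptotics.

Theorem mainTheorem5 (R : realType) (k : nat) (hk : (0 < k)%N) (s : 'I_k -> nat)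
  (hs : forall i, (0 < s i)%N) :
  forall eps : R, 0 < eps ->
  exists N : nat, forall n : nat, (N <= n)%N ->
  forall A : 'I_k -> {set 'I_n}, (forall i, #|~: A i| = s i) ->
  `| Q1 R (Ordinal hk) A - incl_excl R (Ordinal hk) s | < eps.
Proof.
move=> eps eps_gt0; set p1 := Ordinal hk; set K := (\sum_i s i)%N.
have sK i : (s i <= K)%N by rewrite /K (bigD1 i) //= leq_addr.
set C := \sum_(J : {ffun 'I_k -> 'I_K.+1}) `|weight R s J|.
set err := C * (2 * (k * K)%:R) / eps.
exists (2 * (k * K) + Num.Def.truncn err).+1 => n n_large A missA.
have n_gt0 : (0 < n)%N by apply: leq_trans n_large.
rewrite (Q1_geometric R (hs p1) sK _ missA); last by move: n_large; nia.
rewrite -(win_prob_limitE R (hs p1) sK).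
apply: le_lt_trans (Q1_geometric_approx R (hs p1) sK _) _; first by move: n_large; nia.
have err_lt_n : err < n%:R.
  by apply: lt_le_trans (truncnS_gt err) _; rewrite ler_nat (leq_trans _ n_large) // ltnS leq_addl.
rewrite /err ltr_pdivrMr // in err_lt_n.
by rewrite !mulrA ltr_pdivrMr ?ltr0n // -mulrA [eps * _]mulrC.
Qed.
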